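(* There exist absolute constants $K_0,K_1,C>1$ such that the following holds. Let $A\in[0,1]^{m\times n}$ with $\Delta_1\ge K_0$, $x\in\mathbb{R}_{\ge0}^n$ with $Ax\ge\mathbf 1$, and $\alpha=\ln\Delta_1+\ln\ln\Delta_1+K_1$. Let $i\in[m]$ and let $\theta_i\in(0,1]$ satisfy $\sum_{j:A_{i,j}\ge\theta_i}A_{i,j}x_j\ge\frac12$ and $\sum_{j:A_{i,j}\le\theta_i}A_{i,j}x_j\ge\frac12$. If $z$ is the randomized rounding of $\alpha x$, then $\Pr[(Az)_i<1]\le C\,\theta_i/\Delta_1$.
   Context: $\Delta_1=\max_{j\in[n]}\sum_{i=1}^mA_{i,j}$. Randomized rounding of $\alpha x$: $z\in\mathbb{Z}_{\ge0}^n$ is the random vector with independent coordinates $z_j=\lfloor\alpha x_j\rfloor+B_j$, where $B_j\in\{0,1\}$ is Bernoulli with $\Pr[B_j=1]=\alpha x_j-\lfloor\alpha x_j\rfloor$. *)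

From mathcomp Require Import ssreflect ssrfun ssrbool eqtype ssrnat seq choice fintype finfun bigop.
From Stdlib Require Import Reals.
Set Implicit Arguments. Unset Strict Implicit. Unset Printing Implicit Defensive.
Open Scope R_scope.

Definition Rleb (a b : R) : bool := if Rle_dec a b then true else false.
Definition Rltb (a b : R) : bool := if Rlt_dec a b then true else false.

Definition rfloor (x : R) : R := IZR (Int_part x).
Definition rfrac (x : R) : R := x - rfloor x.

(* Delta_1 = max_j sum_i A_{i,j}  (0 when n = 0) *)
Definition Delta1 (m n : nat) (A : 'I_m -> 'I_n -> R) : R :=
  \big[Rmax/0]_(j : 'I_n) (\big[Rplus/0]_(i : 'I_m) A i j).

Definition rowdot (m n : nat) (A : 'I_m -> 'I_n -> R) (i : 'I_m) (y : 'I_n -> R) : R :=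
  \big[Rplus/0]_(j : 'I_n) (A i j * y j).

(* Randomized rounding of a*x: z_j = floor(a x_j) + B_j, B_j independent Bernoulli
   with Pr[B_j = 1] = frac(a x_j).  An outcome is B : {ffun 'I_n -> bool}. *)
Definition rr_value (n : nat) (a : R) (x : 'I_n -> R) (B : {ffun 'I_n -> bool}) (j : 'I_n) : R :=
  rfloor (a * x j) + (if B j then 1 else 0).

Definition rr_weight (n : nat) (a : R) (x : 'I_n -> R) (B : {ffun 'I_n -> bool}) : R :=
  \big[Rmult/1]_(j : 'I_n) (if B j then rfrac (a * x j) else 1 - rfrac (a * x j)).

Definition Pr_row_lt1 (m n : nat) (A : 'I_m -> 'I_n -> R) (a : R) (x : 'I_n -> R) (i : 'I_m) : R :=
  \big[Rplus/0]_(B : {ffun 'I_n -> bool} | Rltb (rowdot A i (rr_value a x B)) 1)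
     rr_weight a x B.

From HB Require Import structures.
From mathcomp Require Import ssreflect ssrfun ssrbool eqtype ssrnat seq choice fintype finfun bigop.
From Stdlib Require Import Reals Lra Lia.
Set Implicit Arguments. Unset Strict Implicit.
Open Scope R_scope.

(* Chernoff bound for the lower tail: for [t >= 0],
   [Pr[(Az)_i < 1] <= e^t E[e^(-t (Az)_i)]], the expectation factorises over the
   independent coordinates, and a rounded coordinate [z] of [y] satisfies
   [E[e^(-s z)] <= exp(-y (1 - e^(-s)))].  Take [L = ln Delta_1] and
   [t = ln L / theta].  By convexity of [exp], an entry [A_ij <= theta]
   contributes at least [(1 - 1/L) A_ij x_j / theta] to
   [sum_j x_j (1 - e^(-t A_ij))] and any other entry at least
   [(1 - 1/L) A_ij x_j], so this sum is at least [(1 - 1/L)(1 + 1/theta)/2],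
   using only that the row has mass [>= 1] and mass [>= 1/2] on entries
   [<= theta].  With [alpha = L + ln L + 6] and [beta = alpha (1 - 1/L)/2]
   the bound reads [exp(ln L/theta - beta (1 + 1/theta))]; as
   [beta - ln L >= 1], the factor [1/theta <= e^((beta - ln L)(1/theta - 1))]
   is absorbed, leaving [theta e^(ln L - 2 beta) <= theta e^(2 - L)
   = e^2 theta / Delta_1]. *)

HB.instance Definition _ := Monoid.isComLaw.Build R 0 Rplus
  (fun x y z => esym (Rplus_assoc x y z)) Rplus_comm Rplus_0_l.
HB.instance Definition _ := Monoid.isComLaw.Build R 1 Rmult
  (fun x y z => esym (Rmult_assoc x y z)) Rmult_comm Rmult_1_l.
HB.instance Definition _ := Monoid.isMulLaw.Build R 0 Rmult Rmult_0_l Rmult_0_r.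
HB.instance Definition _ :=
  Monoid.isAddLaw.Build R Rmult Rplus Rmult_plus_distr_r Rmult_plus_distr_l.

Lemma Rsum_le (I : finType) (P : pred I) (F G : I -> R) :
  (forall i, P i -> F i <= G i) ->
  \big[Rplus/0]_(i | P i) F i <= \big[Rplus/0]_(i | P i) G i.
Proof. by move=> FG; apply: (big_ind2 (fun a b => a <= b)) => // *; lra. Qed.

Lemma Rprod_le (I : finType) (F G : I -> R) :
  (forall i, 0 <= F i <= G i) ->
  \big[Rmult/1]_i F i <= \big[Rmult/1]_i G i.
Proof.
move=> FG; suff [] : 0 <= \big[Rmult/1]_i F i <= \big[Rmult/1]_i G i by [].
apply: (big_ind2 (fun a b => 0 <= a <= b)) => //; first lra.
move=> a b c d [a0 ab] [c0 cd]; split; first exact: Rmult_le_pos.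
apply: Rmult_le_compat; lra.
Qed.

Lemma Rsum_opp (I : finType) (F : I -> R) :
  \big[Rplus/0]_i (- F i) = - \big[Rplus/0]_i F i.
Proof. by rewrite (big_morph Ropp Ropp_plus_distr Ropp_0). Qed.

Lemma exp_sum (I : finType) (F : I -> R) :
  exp (\big[Rplus/0]_i F i) = \big[Rmult/1]_i exp (F i).
Proof. by rewrite (big_morph exp exp_plus exp_0). Qed.

Lemma exp_le (a b : R) : a <= b -> exp a <= exp b.
Proof. by case=> [/exp_increasing/Rlt_le | ->]; last exact: Rle_refl. Qed.

Lemma ln_le (a b : R) : 0 < a -> a <= b -> ln a <= ln b.
Proof. by move=> a0; case=> [/(ln_increasing _ _ a0)/Rlt_le | ->]; last exact: Rle_refl. Qed.

Lemma exp_le_chord (l a : R) : 0 <= l <= 1 -> exp (l * a) <= l * exp a + (1 - l).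
Proof.
move=> l01; set c := l * a.
have ec := exp_pos c.
have tangent_a : exp c * (1 + (a - c)) <= exp a.
  have -> : exp a = exp c * exp (a - c) by rewrite -exp_plus; f_equal; ring.
  apply: Rmult_le_compat_l; [lra | exact: exp_ineq1_le].
have tangent_0 : exp c * (1 + (0 - c)) <= 1.
  apply: (Rle_trans _ (exp c * exp (0 - c))).
    by apply: Rmult_le_compat_l; [lra | exact: exp_ineq1_le].
  by rewrite -exp_plus -exp_0; right; f_equal; ring.
have : exp c = l * (exp c * (1 + (a - c))) + (1 - l) * (exp c * (1 + (0 - c))).
  by rewrite /c; ring.
nra.
Qed.

Lemma rfloor_rfrac_bounds (y : R) :
  0 <= y -> 0 <= rfloor y <= y /\ 0 <= rfrac y <= 1.
Proof.
move=> y0; have [floor_le floor_gt] := base_Int_part y.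
have : (0 <= Int_part y)%Z.
  have : (-1 < Int_part y)%Z by apply: lt_IZR; lra.
  lia.
move=> /IZR_le; rewrite /rfrac /rfloor; lra.
Qed.

Lemma rounding_mgf_le (y s : R) : 0 <= y -> 0 <= s ->
  rfrac y * exp (- (s * (rfloor y + 1))) + (1 - rfrac y) * exp (- (s * rfloor y))
  <= exp (- (y * (1 - exp (- s)))).
Proof.
move=> y0 s0; have [[f0 _] [p0 p1]] := rfloor_rfrac_bounds y0.
have y_eq : y = rfloor y + rfrac y by rewrite /rfrac; ring.
move: y_eq f0 p0 p1; move: (rfloor y) (rfrac y) => f p -> f0 p0 p1.
set q := 1 - exp (- s).
have q_le_s : q <= s by have := exp_ineq1_le (- s); rewrite /q; lra.
have q_le1 : q <= 1 by have := exp_pos (- s); rewrite /q; lra.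
have q_ge0 : 0 <= q.
  have : exp (- s) <= exp 0 by apply: exp_le; lra.
  rewrite exp_0 /q; lra.
have -> : p * exp (- (s * (f + 1))) + (1 - p) * exp (- (s * f))
          = exp (- (s * f)) * (1 - p * q).
  have -> : - (s * (f + 1)) = - (s * f) + - s by ring.
  by rewrite exp_plus /q; ring.
have -> : - ((f + p) * q) = - (q * f) + - (p * q) by ring.
rewrite exp_plus; apply: Rmult_le_compat.
- exact: Rlt_le (exp_pos _).
- have : p * q <= p * 1 by apply: Rmult_le_compat_l.
  lra.
- by apply: exp_le; nra.
- by have := exp_ineq1_le (- (p * q)); lra.
Qed.

Section RowChernoff.

Variables (m n : nat) (A : 'I_m -> 'I_n -> R) (a : R) (x : 'I_n -> R) (i : 'I_m).
Hypotheses (a_ge0 : 0 <= a) (x_ge0 : forall j, 0 <= x j).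

Lemma rr_weight_ge0 (B : {ffun 'I_n -> bool}) : 0 <= rr_weight a x B.
Proof.
apply: (big_ind (fun v => 0 <= v)); [lra | exact: Rmult_le_pos |].
move=> j _; have [_ [p0 p1]] := rfloor_rfrac_bounds (Rmult_le_pos _ _ a_ge0 (x_ge0 j)).
by case: (B j); lra.
Qed.

Lemma Pr_row_lt1_le_mgf (t : R) : 0 <= t ->
  Pr_row_lt1 A a x i <= exp t *
    \big[Rplus/0]_(B : {ffun 'I_n -> bool})
      (rr_weight a x B * exp (- (t * rowdot A i (rr_value a x B)))).
Proof.
move=> t0; rewrite /Pr_row_lt1 big_mkcond big_distrr /=; apply: Rsum_le => B _.
have w0 := rr_weight_ge0 B.
have e0 := exp_pos (- (t * rowdot A i (rr_value a x B))).
rewrite /Rltb; destruct (Rlt_dec (rowdot A i (rr_value a x B)) 1) as [lt1 |]; last first.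
  by apply: Rmult_le_pos; [exact: Rlt_le (exp_pos _) | apply: Rmult_le_pos; lra].
rewrite Rmult_comm Rmult_assoc -exp_plus.
rewrite -{1}(Rmult_1_r (rr_weight a x B)); apply: Rmult_le_compat_l => //.
by rewrite -exp_0; apply: exp_le; nra.
Qed.

Lemma rr_mgf_factor (t : R) :
  \big[Rplus/0]_(B : {ffun 'I_n -> bool})
      (rr_weight a x B * exp (- (t * rowdot A i (rr_value a x B))))
  = \big[Rmult/1]_j
      (rfrac (a * x j) * exp (- (t * (A i j * (rfloor (a * x j) + 1))))
       + (1 - rfrac (a * x j)) * exp (- (t * (A i j * (rfloor (a * x j) + 0))))).
Proof.
pose F j (b : bool) := (if b then rfrac (a * x j) else 1 - rfrac (a * x j))
  * exp (- (t * (A i j * (rfloor (a * x j) + (if b then 1 else 0))))).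
have -> : \big[Rplus/0]_(B : {ffun 'I_n -> bool})
      (rr_weight a x B * exp (- (t * rowdot A i (rr_value a x B))))
    = \big[Rplus/0]_(B : {ffun 'I_n -> bool}) \big[Rmult/1]_j F j (B j).
  apply: eq_bigr => B _; rewrite big_split /= /rowdot big_distrr /= -Rsum_opp exp_sum.
  by congr (_ * _); apply: eq_bigr => j _.
by rewrite -bigA_distr_bigA; apply: eq_bigr => j _; rewrite big_bool.
Qed.

Lemma Pr_row_lt1_le_chernoff (t : R) : 0 <= t -> (forall j, 0 <= A i j) ->
  Pr_row_lt1 A a x i
  <= exp (t - \big[Rplus/0]_j (a * x j * (1 - exp (- (t * A i j))))).
Proof.
move=> t0 A_ge0; apply: (Rle_trans _ _ _ (Pr_row_lt1_le_mgf t0)).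
rewrite rr_mgf_factor /Rminus exp_plus -Rsum_opp exp_sum.
apply: Rmult_le_compat_l; first exact: Rlt_le (exp_pos _).
apply: Rprod_le => j.
have y0 := Rmult_le_pos _ _ a_ge0 (x_ge0 j).
have [_ [p0 p1]] := rfloor_rfrac_bounds y0.
have tA_eq c : t * (A i j * c) = t * A i j * c by ring.
rewrite !tA_eq Rplus_0_r; split.
  by apply: Rplus_le_le_0_compat; apply: Rmult_le_pos; try lra; exact: Rlt_le (exp_pos _).
exact: rounding_mgf_le y0 (Rmult_le_pos _ _ t0 (A_ge0 j)).
Qed.

End RowChernoff.

Lemma sum_one_sub_exp_ge (n : nat) (w x : 'I_n -> R) (theta k : R) :
  (forall j, 0 <= w j <= 1) -> (forall j, 0 <= x j) -> 0 < theta <= 1 -> 0 <= k ->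
  1 <= \big[Rplus/0]_j (w j * x j) ->
  1 / 2 <= \big[Rplus/0]_(j | Rleb (w j) theta) (w j * x j) ->
  (1 - exp (- k)) * (1 + / theta) / 2
  <= \big[Rplus/0]_j (x j * (1 - exp (- (k / theta * w j)))).
Proof.
move=> w01 x0 theta01 k0 row_ge1 small_ge.
set c := 1 - exp (- k); set u := / theta.
have c01 : 0 <= c <= 1.
  have : exp (- k) <= exp 0 by apply: exp_le; lra.
  by have := exp_pos (- k); rewrite exp_0 /c; lra.
have theta_u : theta * u = 1 by rewrite /u; field; lra.
have u_ge1 : 1 <= u by nra.
have exponent_eq j : k / theta * w j = k * (w j * u) by rewrite /u; field; lra.
have termwise j :
    c * (w j * x j + (u - 1) * (if Rleb (w j) theta then w j * x j else 0))
    <= x j * (1 - exp (- (k / theta * w j))).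
  have [w0 w1] := w01 j; have wu0 : 0 <= w j * u by apply: Rmult_le_pos; lra.
  rewrite exponent_eq /Rleb; destruct (Rle_dec (w j) theta) as [small | large].
  - have wu1 : w j * u <= 1 by rewrite -theta_u; apply: Rmult_le_compat_r; lra.
    have := exp_le_chord (- k) (conj wu0 wu1).
    rewrite (_ : w j * u * - k = - (k * (w j * u))); last by ring.
    have -> : c * (w j * x j + (u - 1) * (w j * x j))
              = x j * (w j * u - w j * u * exp (- k)) by rewrite /c /u; field; lra.
    by move=> chord; apply: Rmult_le_compat_l => //; lra.
  - have wu1 : 1 <= w j * u by rewrite -theta_u; apply: Rmult_le_compat_r; lra.
    have : exp (- (k * (w j * u))) <= exp (- k) by apply: exp_le; nra.
    have -> : c * (w j * x j + (u - 1) * 0) = x j * (c * w j) by ring.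
    have : c * w j <= c * 1 by apply: Rmult_le_compat_l; lra.
    by move=> cw e_le; apply: Rmult_le_compat_l => //; rewrite /c in cw *; lra.
apply: (Rle_trans _ _ _ _ (@Rsum_le _ xpredT _ _ (fun j _ => termwise j))).
rewrite -big_distrr /= big_split /= -big_distrr /= -big_mkcond.
have -> : c * (1 + u) / 2 = c * (1 + (u - 1) * (1 / 2)) by field.
apply: Rmult_le_compat_l; first lra.
by apply: Rplus_le_compat => //; apply: Rmult_le_compat_l; [lra | exact: small_ge].
Qed.

Lemma tail_exponent_le (L theta : R) : 2 <= L -> 0 < theta <= 1 ->
  exp (ln L / theta - (L + ln L + 6) * ((1 - / L) * (1 + / theta) / 2))
  <= theta * exp (2 - L).
Proof.
move=> L_ge2 theta01; rewrite /Rdiv.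
set k := ln L; set u := / theta; set iL := / L.
have theta_u : theta * u = 1 by rewrite /u; field; lra.
have u_ge1 : 1 <= u by nra.
have L_iL : L * iL = 1 by rewrite /iL; field; lra.
have iL_le : iL <= 1 / 2 by nra.
have k0 : 0 <= k by rewrite /k -ln_1; apply: ln_le; lra.
have k_le : k <= L - 1 by have := exp_ineq1_le k; rewrite /k exp_ln; lra.
have k_iL : k * iL <= 1 - iL.
  have : 0 < iL by rewrite /iL; apply: Rinv_0_lt_compat; lra.
  nra.
set beta := (L + k + 6) * (1 - iL) / 2.
have beta_eq : 2 * beta = L + k + 5 - k * iL - 6 * iL by rewrite /beta; nra.
have -> : k * u - (L + k + 6) * ((1 - iL) * (1 + u) * / 2) = k * u - beta * (1 + u).
  by rewrite /beta; field.
have beta_k : 1 <= beta - k by lra.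
have u_le : u <= exp ((beta - k) * (u - 1)).
  have := exp_ineq1_le ((beta - k) * (u - 1)).
  have : 0 <= (beta - k - 1) * (u - 1) by apply: Rmult_le_pos; lra.
  lra.
apply: (Rle_trans _ (theta * (exp ((beta - k) * (u - 1)) * exp (k * u - beta * (1 + u))))).
  rewrite [X in X <= _](_ : _ = theta * (u * exp (k * u - beta * (1 + u)))); last first.
    by rewrite -Rmult_assoc theta_u Rmult_1_l.
  apply: Rmult_le_compat_l; first lra.
  by apply: Rmult_le_compat_r; [exact: Rlt_le (exp_pos _) | exact: u_le].
apply: Rmult_le_compat_l; first lra.
by rewrite -exp_plus; apply: exp_le; nra.
Qed.

Theorem mainTheorem11 :
  exists K0 K1 C : R, 1 < K0 /\ 1 < K1 /\ 1 < C /\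
  forall (m n : nat) (A : 'I_m -> 'I_n -> R) (x : 'I_n -> R),
    (forall i j, 0 <= A i j <= 1) ->
    K0 <= Delta1 A ->
    (forall j, 0 <= x j) ->
    (forall i, 1 <= rowdot A i x) ->
    let alpha := ln (Delta1 A) + ln (ln (Delta1 A)) + K1 in
    forall (i : 'I_m) (theta : R),
      0 < theta <= 1 ->
      1 / 2 <= \big[Rplus/0]_(j : 'I_n | Rleb theta (A i j)) (A i j * x j) ->
      1 / 2 <= \big[Rplus/0]_(j : 'I_n | Rleb (A i j) theta) (A i j * x j) ->
      Pr_row_lt1 A alpha x i <= C * theta / Delta1 A.
Proof.
have e2_gt1 : 1 < exp 2 by have := exp_ineq1_le 2; lra.
exists (exp 2), 6, (exp 2); do 3 (split; first lra).
move=> m n A x A01 D_ge x0 row_ge1 alpha i theta theta01 _ small_ge.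
have L_ge2 : 2 <= ln (Delta1 A) by rewrite -(ln_exp 2); apply: ln_le; lra.
have k0 : 0 <= ln (ln (Delta1 A)) by rewrite -ln_1; apply: ln_le; lra.
have alpha0 : 0 <= alpha by rewrite /alpha; lra.
have t0 : 0 <= ln (ln (Delta1 A)) / theta.
  by apply: Rmult_le_pos => //; apply/Rlt_le/Rinv_0_lt_compat; lra.
have gain := sum_one_sub_exp_ge (A01 i) x0 theta01 k0 (row_ge1 i) small_ge.
rewrite exp_Ropp exp_ln in gain; last lra.
apply: (Rle_trans _ _ _ (Pr_row_lt1_le_chernoff alpha0 x0 t0 (fun j => proj1 (A01 i j)))).
rewrite (_ : \big[Rplus/0]_j _ = alpha * \big[Rplus/0]_j
    (x j * (1 - exp (- (ln (ln (Delta1 A)) / theta * A i j))))); last first.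
  by rewrite big_distrr /=; apply: eq_bigr => j _; ring.
rewrite (_ : exp 2 * theta / Delta1 A = theta * exp (2 - ln (Delta1 A))); last first.
  by rewrite /Rminus exp_plus exp_Ropp exp_ln; [field|]; lra.
apply: (Rle_trans _ _ _ _ (tail_exponent_le L_ge2 theta01)).
by apply: exp_le; have := Rmult_le_compat_l _ _ _ alpha0 gain; rewrite /alpha; lra.
Qed.
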